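(* Let $M>0$ and $0\le\alpha<1$, and let $r_0=r_0(\alpha)$ be the real root in $(0,1)$ of the equation \[M(1-\alpha+\alpha r)=(1+M)(1-\alpha)(1-r)^2.\] Let $\mathcal{F}$ be the class of analytic functions $f(z)=z+\sum_{n\ge2}a_nz^n$ on $\mathbb{D}$ with $|a_n|\le M$ for all $n\ge2$. Then every $f\in\mathcal{F}$ satisfies $\left|\frac{zf'(z)}{f(z)}-1\right|\le1-\alpha$ for $|z|\le r_0$; $r_0(\alpha)$ is the radius of starlikeness of order $\alpha$ of $\mathcal{F}$; and $r_0(1/2)$ is the radius of parabolic starlikeness of $\mathcal{F}$. All results are sharp (in particular $r_0$ in the first statement cannot be replaced by any larger number).
   Context: $\mathbb{D}=\{z\in\mathbb{C}:|z|<1\}$. For a class $\mathcal{F}$ of analytic functions on $\mathbb{D}$ normalized by $f(0)=0$, $f'(0)=1$, and $0\le\alpha<1$, the radius of starlikeness of order $\alpha$ of $\mathcal{F}$ is the supremum of $r\in(0,1]$ such that every $f\in\mathcal{F}$ satisfies $f(z)\ne0$ for $0<|z|<r$ and $\operatorname{Re}\big(zf'(z)/f(z)\big)>\alpha$ for $|z|<r$ (the quotient being $1$ at $z=0$). The radius of parabolic starlikeness of $\mathcal{F}$ is the supremum of $r\in(0,1]$ such that every $f\in\mathcal{F}$ satisfies $\operatorname{Re}\big(zf'(z)/f(z)\big)>\left|zf'(z)/f(z)-1\right|$ for $|z|<r$. *)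

From Stdlib Require Import Reals.
From Coquelicot Require Import Coquelicot.
Open Scope R_scope.

(* The class F: analytic f on the unit disc with f(z) = z + sum_{n>=2} a_n z^n, |a_n| <= M.
   f is represented as a function C -> C (values outside the disc irrelevant). *)
Definition classF (M : R) (f : C -> C) : Prop :=
  exists a : nat -> C,
    a 0%nat = 0%C /\ a 1%nat = 1%C /\
    (forall n : nat, (2 <= n)%nat -> Cmod (a n) <= M) /\
    (forall z : C, Cmod z < 1 -> is_pseries a z (f z)).

(* f is starlike of order alpha on |z| < r: f(z) <> 0 for 0 < |z| < r and
   Re (z f'(z)/f(z)) > alpha there (at z = 0 the quotient is 1 > alpha, automatic).
   f'(z) is the complex derivative d (is_derive f z d). *)
Definition starlike_order_on (alpha : R) (f : C -> C) (r : R) : Prop :=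
  forall z : C, z <> 0%C -> Cmod z < r ->
    f z <> 0%C /\
    (forall d : C, is_derive f z d -> alpha < Re (z * d / f z)%C).

(* Parabolic starlikeness on |z| < r: Re w > |w - 1| with w = z f'(z)/f(z)
   (w = 1 at z = 0, where the inequality 1 > 0 holds automatically). *)
Definition parabolic_starlike_on (f : C -> C) (r : R) : Prop :=
  forall z : C, z <> 0%C -> Cmod z < r ->
    forall d : C, is_derive f z d ->
      Cmod ((z * d / f z) - 1)%C < Re (z * d / f z)%C.

Definition radius_starlike (M alpha : R) (rho : R) : Prop :=
  is_lub (fun r => 0 < r <= 1 /\ forall f, classF M f -> starlike_order_on alpha f r) rho.

Definition radius_parabolic (M : R) (rho : R) : Prop :=
  is_lub (fun r => 0 < r <= 1 /\ forall f, classF M f -> parabolic_starlike_on f r) rho.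

Definition r0_eq (M alpha r : R) : Prop :=
  M * (1 - alpha + alpha * r) = (1 + M) * (1 - alpha) * (1 - r) ^ 2.

From Stdlib Require Import Reals Lra Lia Psatz.
From Coquelicot Require Import Coquelicot.
Open Scope R_scope.

(* Write [f(z) = z + sum a_n z^n] with [|a_n| <= M] and put [s = |z|]. Bounding the series termwise,
   [|f(z) - z| <= M s^2/(1-s)] and [|z f'(z) - f(z)| <= M s^2/(1-s)^2], hence
   [|z f'(z)/f(z) - 1| <= M s / ((1-s)(1-s-Ms))] as long as [1 - s - Ms > 0]. Equality holds at
   [z = s] for [f(z) = z - M z^2/(1-z)], whose coefficients are all [-M]. The bound is at most
   [1 - alpha] exactly when [(1-alpha)(1-s)(1-s-Ms) - Ms >= 0]; this quadratic is positive at [0],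
   negative at [1] and vanishes at [r0], so on [[0, 1)] it has the sign of [r0 - s]. Since
   [Re w >= 1 - |w - 1|], the bound gives starlikeness of order [alpha] (and, for [alpha = 1/2],
   parabolic starlikeness) inside [r0], while the extremal function violates both beyond it. *)

Lemma sum_n_R_succ (v : nat -> R) N : sum_n v (S N) = sum_n v N + v (S N).
Proof. exact (sum_Sn v N). Qed.

Lemma sum_n_R_scal (k : R) (v : nat -> R) N : sum_n (fun n => k * v n) N = k * sum_n v N.
Proof. apply (sum_n_mult_l (K := R_Ring)). Qed.

Lemma ex_series_nonneg_bounded (v : nat -> R) B :
  (forall n, 0 <= v n) -> (forall N, sum_n v N <= B) -> ex_series v.
Proof.
  intros Hv HB.
  destruct (ex_finite_lim_seq_incr (sum_n v) B) as [l Hl]; [|exact HB|now exists l].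
  intros n. rewrite sum_n_R_succ. specialize (Hv (S n)). lra.
Qed.

Lemma geom_partial_sum (s : R) N : (1 - s) * sum_n (fun n => s ^ n) N = 1 - s ^ S N.
Proof.
  induction N as [|N IH]; [rewrite sum_O; simpl; ring|].
  rewrite sum_n_R_succ, Rmult_plus_distr_l, IH. simpl. ring.
Qed.

Lemma deriv_geom_partial_sum (s : R) N :
  (1 - s) ^ 2 * sum_n (fun n => INR (S n) * s ^ n) N
  = 1 - INR (S (S N)) * s ^ S N + INR (S N) * s ^ S (S N).
Proof.
  induction N as [|N IH]; [rewrite sum_O; simpl; ring|].
  rewrite sum_n_R_succ, Rmult_plus_distr_l, IH, !S_INR. simpl. ring.
Qed.

(* [taylor2_coef r (S m) = C(m+2, 2) r^m] is the [m]-th term of the series of [1/(1-r)^3]; on the disc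
   of radius [r] it bounds the second-order Taylor remainder of [w^(m+2)] (see [Cpow_taylor2_le]). *)
Definition taylor2_coef (r : R) (n : nat) : R :=
  match n with O => 0 | S m => INR (S m) * INR (S (S m)) / 2 * r ^ m end.

Lemma taylor2_partial_sum (r : R) N :
  (1 - r) ^ 3 * sum_n (taylor2_coef r) N
  = 1 - r ^ N * (INR (S N) * INR (S (S N)) / 2 * (1 - r) ^ 2
                 + INR (S (S N)) * r * (1 - r) + r ^ 2).
Proof.
  induction N as [|N IH]; [rewrite sum_O; simpl; field|].
  rewrite sum_n_R_succ, Rmult_plus_distr_l, IH. unfold taylor2_coef.
  rewrite !S_INR. simpl. field.
Qed.

Lemma geom_partial_sum_le (s : R) N : 0 <= s < 1 -> sum_n (fun n => s ^ n) N <= / (1 - s).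
Proof.
  intros Hs. pose proof (geom_partial_sum s N) as E.
  assert (0 <= s ^ S N) by (apply pow_le; lra).
  apply (Rmult_le_reg_l (1 - s)); [lra|]. rewrite E, Rinv_r; lra.
Qed.

Lemma deriv_geom_partial_sum_le (s : R) N : 0 <= s < 1 ->
  sum_n (fun n => INR (S n) * s ^ n) N <= / (1 - s) ^ 2.
Proof.
  intros Hs. pose proof (deriv_geom_partial_sum s N) as E.
  assert (Hp : 0 <= s ^ S N) by (apply pow_le; lra).
  assert (HN : 0 <= INR N) by apply pos_INR.
  assert (INR (S N) * s ^ S (S N) <= INR (S (S N)) * s ^ S N).
  { change (s ^ S (S N)) with (s * s ^ S N). rewrite !S_INR.
    assert (0 <= s ^ S N * (INR N + 2 - (INR N + 1) * s)) by (apply Rmult_le_pos; nra).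
    nra. }
  assert (0 < (1 - s) ^ 2) by (apply pow_lt; lra).
  apply (Rmult_le_reg_l ((1 - s) ^ 2)); [lra|]. rewrite E, Rinv_r; lra.
Qed.

Lemma taylor2_partial_sum_le (r : R) N : 0 <= r < 1 -> sum_n (taylor2_coef r) N <= / (1 - r) ^ 3.
Proof.
  intros Hr. pose proof (taylor2_partial_sum r N) as E.
  assert (0 <= r ^ N) by (apply pow_le; lra).
  assert (0 <= INR N) by apply pos_INR.
  assert (0 <= INR (S N) * INR (S (S N)) / 2 * (1 - r) ^ 2
               + INR (S (S N)) * r * (1 - r) + r ^ 2).
  { rewrite !S_INR. assert (0 <= (1 - r) ^ 2) by (apply pow_le; lra).
    assert (0 <= r * (1 - r)) by nra. nra. }
  assert (0 < (1 - r) ^ 3) by (apply pow_lt; lra).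
  apply (Rmult_le_reg_l ((1 - r) ^ 3)); [lra|]. rewrite E, Rinv_r; nra.
Qed.

Lemma Cmod_sum_n_le (u : nat -> C) (v : nat -> R) :
  (forall n, Cmod (u n) <= v n) -> forall N, Cmod (sum_n u N) <= sum_n v N.
Proof.
  intros Huv N; induction N as [|N IH]; [rewrite !sum_O; apply Huv|].
  rewrite !sum_Sn. eapply Rle_trans; [apply Cmod_triangle|].
  specialize (Huv (S N)). change (plus (sum_n v N) (v (S N))) with (sum_n v N + v (S N)). lra.
Qed.

Lemma Cmod_series_le (u : nat -> C) (l : C) (v : nat -> R) (B : R) :
  is_series u l -> (forall n, Cmod (u n) <= v n) -> (forall N, sum_n v N <= B) ->
  Cmod l <= B.
Proof.
  intros Hl Huv HB.
  assert (Hlim : is_lim_seq (fun N => Cmod (sum_n u N)) (Cmod l)).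
  { exact (filterlim_comp _ _ _ (sum_n u) norm eventually (locally l) (locally (norm l))
             Hl (filterlim_norm (V := C_NormedModule) l)). }
  exact (is_lim_seq_le _ _ _ _ (fun N => Rle_trans _ _ _ (Cmod_sum_n_le u v Huv N) (HB N))
           Hlim (is_lim_seq_const B)).
Qed.

Lemma is_series_C_succ (u : nat -> C) (l : C) :
  is_series u l -> is_series (fun n => u (S n)) (l - u O)%C.
Proof.
  intros Hl.
  assert (E : l = plus (l - u O)%C (u O)) by (change (l = l - u O + u O)%C; ring).
  rewrite E in Hl at 1. exact (is_series_incr_1 (V := C_NormedModule) _ _ Hl).
Qed.

Lemma is_pseries_C_succ (a : nat -> C) (w l : C) :
  is_pseries a w l -> is_series (fun n => Cpow w (S n) * a (S n))%C (l - a O)%C.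
Proof.
  intros Hl.
  assert (E : l = plus (l - a O)%C (scal (pow_n w O) (a O)))
    by (change (l = l - a O + 1 * a O)%C; ring).
  rewrite E in Hl at 1. exact (is_series_incr_1 (V := C_NormedModule) _ _ Hl).
Qed.

Lemma filterlim_C_geometric (u : nat -> C) (l : C) (K q : R) :
  0 <= q < 1 -> (forall N, Cmod (u N - l)%C <= K * q ^ N) ->
  filterlim u eventually (locally l).
Proof.
  intros Hq Hu. apply filterlim_locally. intros eps.
  assert (HK : 0 < Rabs K + 1) by (pose proof (Rabs_pos K); lra).
  destruct (pow_lt_1_zero q ltac:(rewrite Rabs_right; lra) (eps / (Rabs K + 1))) as [N0 HN0].
  { apply Rdiv_lt_0_compat; [apply cond_pos | lra]. }
  exists N0. intros n Hn. apply (norm_compat1 (V := C_NormedModule)).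
  change (Cmod (u n - l)%C < eps).
  eapply Rle_lt_trans; [apply Hu|].
  specialize (HN0 n Hn). rewrite Rabs_right in HN0 by (apply Rle_ge, pow_le; lra).
  assert (0 <= q ^ n) by (apply pow_le; lra).
  apply (Rmult_lt_compat_l (Rabs K + 1)) in HN0; [|lra].
  replace ((Rabs K + 1) * (eps / (Rabs K + 1))) with (pos eps) in HN0 by (field; lra).
  pose proof (Rle_abs K). nra.
Qed.

Lemma Cminus_1_neq_0 (w : C) : Cmod w < 1 -> (1 - w)%C <> 0%C.
Proof.
  intros Hw E. assert (w = 1%C) as ->
    by (transitivity (1 - (1 - w))%C; [ring | rewrite E; ring]).
  rewrite Cmod_1 in Hw. lra.
Qed.

Lemma geom_partial_sum_C (w : C) N :
  (sum_n (fun n => Cpow w n) N * (1 - w) = 1 - Cpow w (S N))%C.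
Proof.
  induction N as [|N IH]; [rewrite sum_O; simpl; ring|].
  rewrite sum_Sn. change ((sum_n (fun n => Cpow w n) N + Cpow w (S N)) * (1 - w)
                          = 1 - Cpow w (S (S N)))%C.
  rewrite Cmult_plus_distr_r, IH. simpl. ring.
Qed.

Lemma is_series_C_geom (w : C) : Cmod w < 1 -> is_series (fun n => Cpow w n) (/ (1 - w))%C.
Proof.
  intros Hw. pose proof (Cminus_1_neq_0 w Hw) as Hnz.
  apply (filterlim_C_geometric _ _ (Cmod w / Cmod (1 - w)%C) (Cmod w)).
  { split; [apply Cmod_ge_0 | exact Hw]. }
  intros N.
  assert (E : (sum_n (fun n => Cpow w n) N - / (1 - w) = - Cpow w (S N) / (1 - w))%C).
  { pose proof (geom_partial_sum_C w N) as G. set (X := sum_n _ N) in *.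
    replace X with (X * (1 - w) / (1 - w))%C by (field; exact Hnz).
    rewrite G. field. exact Hnz. }
  change (Cmod (sum_n (fun n => Cpow w n) N - / (1 - w))%C <= Cmod w / Cmod (1 - w)%C * Cmod w ^ N).
  rewrite E, Cmod_div, Cmod_opp, Cmod_pow by exact Hnz. simpl. right. field.
  apply Cmod_gt_0 in Hnz. lra.
Qed.

Lemma is_derive_C_of_remainder_le (f : C -> C) (z D : C) (del K : R) : 0 < del -> 0 <= K ->
  (forall y, Cmod (y - z)%C < del -> Cmod (f y - f z - (y - z) * D)%C <= K * Cmod (y - z)%C ^ 2) ->
  is_derive f z D.
Proof.
  intros Hdel HK Hrem. split; [apply is_linear_scal_l|].
  intros x Hx. apply (is_filter_lim_locally_unique (V := AbsRing_NormedModule C_AbsRing)) in Hx.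
  subst x. intros eps.
  pose proof (norm_factor_gt_0 (V := AbsRing_NormedModule C_AbsRing)) as Hnf.
  set (rad := Rmin del (eps / (K + 1))).
  assert (Hrad : 0 < rad).
  { apply Rmin_pos; [exact Hdel|]. apply Rdiv_lt_0_compat; [apply cond_pos | lra]. }
  assert (He : 0 < rad / norm_factor (V := AbsRing_NormedModule C_AbsRing))
    by (apply Rdiv_lt_0_compat; assumption).
  exists (mkposreal _ He). intros y Hy.
  apply (norm_compat2 (V := AbsRing_NormedModule C_AbsRing)) in Hy. simpl in Hy.
  replace (norm_factor * (rad / norm_factor)) with rad in Hy by (field; lra).
  change (Cmod (f y - f z - (y - z) * D)%C <= eps * Cmod (y - z)%C).
  change (Cmod (y - z)%C < rad) in Hy.
  assert (H1 : Cmod (y - z)%C < del) by (eapply Rlt_le_trans; [exact Hy | apply Rmin_l]).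
  assert (H2 : Cmod (y - z)%C * (K + 1) < eps).
  { apply (Rmult_lt_reg_r (/ (K + 1))); [apply Rinv_0_lt_compat; lra|].
    rewrite Rmult_assoc, Rinv_r, Rmult_1_r by lra.
    eapply Rlt_le_trans; [exact Hy | apply Rmin_r]. }
  eapply Rle_trans; [exact (Hrem y H1)|].
  pose proof (Cmod_ge_0 (y - z)%C). pose proof (cond_pos eps). simpl. nra.
Qed.

Lemma taylor2_coef_succ (r : R) n :
  r * taylor2_coef r n + INR (S n) * r ^ n = taylor2_coef r (S n).
Proof. destruct n as [|m]; [simpl; field|]. unfold taylor2_coef. rewrite !S_INR. simpl. field. Qed.

Lemma Cpow_taylor2_le (y z : C) (r : R) n : Cmod y <= r -> Cmod z <= r ->
  Cmod (Cpow y (S n) - Cpow z (S n) - (y - z) * (INR (S n) * Cpow z n))%C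
  <= Cmod (y - z)%C ^ 2 * taylor2_coef r n.
Proof.
  intros Hy Hz. assert (Hr : 0 <= r) by (pose proof (Cmod_ge_0 z); lra).
  induction n as [|n IH].
  { match goal with |- Cmod ?X <= _ => replace X with (RtoC 0) by (simpl; ring) end.
    rewrite Cmod_0. simpl. lra. }
  replace (Cpow y (S (S n)) - Cpow z (S (S n)) - (y - z) * (INR (S (S n)) * Cpow z (S n)))%C
    with (y * (Cpow y (S n) - Cpow z (S n) - (y - z) * (INR (S n) * Cpow z n))
          + INR (S n) * ((y - z) * (y - z)) * Cpow z n)%C
    by (rewrite (S_INR (S n)), RtoC_plus; simpl; ring).
  rewrite <- taylor2_coef_succ, Rmult_plus_distr_l.
  eapply Rle_trans; [apply Cmod_triangle|]. apply Rplus_le_compat.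
  - rewrite Cmod_mult.
    replace (Cmod (y - z)%C ^ 2 * (r * taylor2_coef r n))
      with (r * (Cmod (y - z)%C ^ 2 * taylor2_coef r n)) by ring.
    apply Rmult_le_compat; auto using Cmod_ge_0.
  - rewrite !Cmod_mult, Cmod_R, Rabs_right, Cmod_pow by (apply Rle_ge, pos_INR).
    assert (Hzn : Cmod z ^ n <= r ^ n) by (apply pow_incr; split; [apply Cmod_ge_0 | exact Hz]).
    assert (0 <= INR (S n) * (Cmod (y - z)%C * Cmod (y - z)%C)).
    { apply Rmult_le_pos; [apply pos_INR|]. apply Rmult_le_pos; apply Cmod_ge_0. }
    simpl pow. nra.
Qed.

Lemma pseries_taylor2_remainder_le (a : nat -> C) (K rho : R) (f : C -> C) (y z D : C) :
  (forall n, Cmod (a n) <= K) -> Cmod y <= rho -> Cmod z <= rho -> rho < 1 ->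
  is_pseries a y (f y) -> is_pseries a z (f z) ->
  is_series (fun n => Cpow z n * (INR (S n) * a (S n)))%C D ->
  Cmod (f y - f z - (y - z) * D)%C <= K * / (1 - rho) ^ 3 * Cmod (y - z)%C ^ 2.
Proof.
  intros Ha Hy Hz Hrho Sy Sz SD.
  assert (Hrho0 : 0 <= rho) by (pose proof (Cmod_ge_0 z); lra).
  assert (HK : 0 <= K) by (pose proof (Cmod_ge_0 (a O)); specialize (Ha O); lra).
  pose proof (is_series_minus (V := C_NormedModule) _ _ _ _
    (is_series_minus (V := C_NormedModule) _ _ _ _
       (is_pseries_C_succ _ _ _ Sy) (is_pseries_C_succ _ _ _ Sz))
    (is_series_scal (V := C_NormedModule) (y - z)%C _ _ SD)) as Srem.
  set (c := Cmod (y - z)%C).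
  replace (f y - f z - (y - z) * D)%C
    with (plus (plus (f y - a O)%C (opp (f z - a O)%C)) (opp (scal (y - z)%C D)))
    by (change ((f y - a O) + - (f z - a O) + - ((y - z) * D) = f y - f z - (y - z) * D)%C; ring).
  replace (K * / (1 - rho) ^ 3 * c ^ 2) with (K * c ^ 2 * / (1 - rho) ^ 3) by ring.
  apply (Cmod_series_le _ _ (fun n => K * c ^ 2 * taylor2_coef rho n) _ Srem).
  - intros n.
    change (Cmod (Cpow y (S n) * a (S n) + - (Cpow z (S n) * a (S n))
                  + - ((y - z) * (Cpow z n * (INR (S n) * a (S n)))))%C
            <= K * c ^ 2 * taylor2_coef rho n).
    replace (Cpow y (S n) * a (S n) + - (Cpow z (S n) * a (S n))
             + - ((y - z) * (Cpow z n * (INR (S n) * a (S n)))))%C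
      with (a (S n) * (Cpow y (S n) - Cpow z (S n) - (y - z) * (INR (S n) * Cpow z n)))%C
      by ring.
    rewrite Cmod_mult, Rmult_assoc.
    apply Rmult_le_compat; [apply Cmod_ge_0 | apply Cmod_ge_0 | apply Ha |].
    exact (Cpow_taylor2_le y z rho n Hy Hz).
  - intros N. rewrite sum_n_R_scal. apply Rmult_le_compat_l.
    + apply Rmult_le_pos; [exact HK | apply pow_le, Cmod_ge_0].
    + apply taylor2_partial_sum_le. lra.
Qed.

Lemma is_derive_pseries_bounded (a : nat -> C) (K : R) (f : C -> C) (z : C) :
  (forall n, Cmod (a n) <= K) -> Cmod z < 1 ->
  (forall w, Cmod w < 1 -> is_pseries a w (f w)) ->
  exists D, is_series (fun n => Cpow z n * (INR (S n) * a (S n)))%C D /\ is_derive f z D.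
Proof.
  intros Ha Hz Hf.
  set (s := Cmod z). assert (Hs : 0 <= s) by apply Cmod_ge_0.
  assert (HK : 0 <= K) by (pose proof (Cmod_ge_0 (a O)); specialize (Ha O); lra).
  assert (Hex : ex_series (fun n => Cpow z n * (INR (S n) * a (S n)))%C).
  { apply (ex_series_le (V := C_CompleteNormedModule) _ (fun n => K * (INR (S n) * s ^ n))).
    - intros n. change (Cmod (Cpow z n * (INR (S n) * a (S n)))%C <= K * (INR (S n) * s ^ n)).
      rewrite !Cmod_mult, Cmod_pow, Cmod_R, Rabs_right by (apply Rle_ge, pos_INR).
      pose proof (pow_le s n Hs). pose proof (pos_INR (S n)). specialize (Ha (S n)).
      fold s. assert (0 <= s ^ n * INR (S n)) by nra. nra.
    - apply ex_series_nonneg_bounded with (B := K * / (1 - s) ^ 2).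
      + intros n. apply Rmult_le_pos; [exact HK|].
        apply Rmult_le_pos; [apply pos_INR | apply pow_le, Hs].
      + intros N. rewrite sum_n_R_scal. apply Rmult_le_compat_l; [exact HK|].
        apply deriv_geom_partial_sum_le. split; [exact Hs | exact Hz]. }
  destruct Hex as [D HD]. exists D. split; [exact HD|].
  (* Every [y] within [(1 - s) / 2] of [z] lies in the disc of radius [(1 + s) / 2] < 1. *)
  set (rho := (1 + s) / 2).
  apply (is_derive_C_of_remainder_le f z D ((1 - s) / 2) (K * / (1 - rho) ^ 3)).
  - unfold s. lra.
  - apply Rmult_le_pos; [exact HK|]. apply Rlt_le, Rinv_0_lt_compat, pow_lt. unfold rho, s. lra.
  - intros y Hy.
    assert (Hyr : Cmod y <= rho).
    { replace y with (z + (y - z))%C by ring.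
      eapply Rle_trans; [apply Cmod_triangle|]. fold s. unfold rho. lra. }
    assert (Hrho : rho < 1) by (unfold rho, s; lra).
    apply (pseries_taylor2_remainder_le a K rho);
      [exact Ha | exact Hyr | unfold rho, s; lra | exact Hrho | apply Hf; lra | apply Hf, Hz
      | exact HD].
Qed.

Lemma classF_M_nonneg (M : R) (f : C -> C) : classF M f -> 0 <= M.
Proof.
  intros [a [_ [_ [Hb _]]]]. pose proof (Cmod_ge_0 (a 2%nat)). specialize (Hb 2%nat (le_n _)). lra.
Qed.

Lemma is_series_pseries_tail (a : nat -> C) (z l : C) : a O = 0%C -> a 1%nat = 1%C ->
  is_pseries a z l -> is_series (fun n => Cpow z (S (S n)) * a (S (S n)))%C (l - z)%C.
Proof.
  intros Ha0 Ha1 Hl. pose proof (is_series_C_succ _ _ (is_pseries_C_succ _ _ _ Hl)) as Hs.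
  simpl in Hs. rewrite Ha0, Ha1 in Hs.
  replace (l - z)%C with (l - 0 - z * 1 * 1)%C by ring. exact Hs.
Qed.

Lemma classF_sub_id_le (M : R) (f : C -> C) (z : C) : classF M f -> Cmod z < 1 ->
  Cmod (f z - z)%C <= M * Cmod z ^ 2 * / (1 - Cmod z).
Proof.
  intros Hf Hz. pose proof (classF_M_nonneg M f Hf) as HM.
  destruct Hf as [a [Ha0 [Ha1 [Hb Hser]]]].
  set (s := Cmod z). assert (Hs : 0 <= s) by apply Cmod_ge_0.
  apply (Cmod_series_le _ _ (fun n => M * s ^ 2 * s ^ n) _
           (is_series_pseries_tail a z (f z) Ha0 Ha1 (Hser z Hz))).
  - intros n. rewrite Cmod_mult, Cmod_pow. fold s.
    replace (M * s ^ 2 * s ^ n) with (s ^ S (S n) * M) by (simpl; ring).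
    apply Rmult_le_compat_l; [apply pow_le, Hs | apply Hb; lia].
  - intros N. rewrite sum_n_R_scal. apply Rmult_le_compat_l.
    + apply Rmult_le_pos; [exact HM | apply pow_le, Hs].
    + apply geom_partial_sum_le. split; [exact Hs | exact Hz].
Qed.

Lemma classF_deriv_le (M : R) (f : C -> C) (z d : C) : classF M f -> Cmod z < 1 ->
  is_derive f z d -> Cmod (z * d - f z)%C <= M * Cmod z ^ 2 * / (1 - Cmod z) ^ 2.
Proof.
  intros Hf Hz Hd. pose proof (classF_M_nonneg M f Hf) as HM.
  destruct Hf as [a [Ha0 [Ha1 [Hb Hser]]]].
  set (s := Cmod z). assert (Hs : 0 <= s) by apply Cmod_ge_0.
  assert (HK : forall n, Cmod (a n) <= M + 1).
  { intros [|[|n]]; [rewrite Ha0, Cmod_0; lra | rewrite Ha1, Cmod_1; lra |].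
    specialize (Hb (S (S n)) ltac:(lia)). lra. }
  destruct (is_derive_pseries_bounded a (M + 1) f z HK Hz Hser) as [D [HD HfD]].
  replace d with D by (apply is_C_derive_unique in Hd; apply is_C_derive_unique in HfD; congruence).
  pose proof (is_series_C_succ _ _ (is_series_minus (V := C_NormedModule) _ _ _ _
    (is_series_scal (V := C_NormedModule) z _ _ HD) (is_pseries_C_succ _ _ _ (Hser z Hz))))
    as Hrem.
  cbv beta in Hrem.
  match type of Hrem with is_series _ ?v =>
    replace v with (z * D - f z)%C in Hrem
      by (change (z * D - f z = (z * D + - (f z - a O))
                   - (z * (Cpow z 0 * (INR 1 * a 1%nat)) + - (Cpow z 1 * a 1%nat)))%C;
          rewrite Ha0; simpl; ring) end.
  apply (Cmod_series_le _ _ (fun n => M * s ^ 2 * (INR (S n) * s ^ n)) _ Hrem).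
  - intros n.
    change (Cmod (z * (Cpow z (S n) * (INR (S (S n)) * a (S (S n))))
                  + - (Cpow z (S (S n)) * a (S (S n))))%C
            <= M * s ^ 2 * (INR (S n) * s ^ n)).
    replace (z * (Cpow z (S n) * (INR (S (S n)) * a (S (S n)))) + - (Cpow z (S (S n)) * a (S (S n))))%C
      with (INR (S n) * Cpow z (S (S n)) * a (S (S n)))%C
      by (rewrite (S_INR (S n)), RtoC_plus; simpl; ring).
    rewrite !Cmod_mult, Cmod_R, Rabs_right, Cmod_pow by (apply Rle_ge, pos_INR). fold s.
    replace (M * s ^ 2 * (INR (S n) * s ^ n)) with (INR (S n) * s ^ S (S n) * M) by (simpl; ring).
    apply Rmult_le_compat_l; [apply Rmult_le_pos; [apply pos_INR | apply pow_le, Hs] |].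
    apply Hb. lia.
  - intros N. rewrite sum_n_R_scal. apply Rmult_le_compat_l.
    + apply Rmult_le_pos; [exact HM | apply pow_le, Hs].
    + apply deriv_geom_partial_sum_le. split; [exact Hs | exact Hz].
Qed.

Definition deviation_bound (M s : R) : R := M * s / ((1 - s) * (1 - s - M * s)).

Lemma classF_deviation_le (M : R) (f : C -> C) (z : C) : classF M f -> z <> 0%C ->
  Cmod z < 1 -> 0 < 1 - Cmod z - M * Cmod z ->
  f z <> 0%C /\
  (forall d, is_derive f z d -> Cmod (z * d / f z - 1)%C <= deviation_bound M (Cmod z)).
Proof.
  intros Hf Hz0 Hz Hadm.
  pose proof (classF_sub_id_le M f z Hf Hz) as Hsub.
  pose proof (classF_M_nonneg M f Hf) as HM.
  set (s := Cmod z) in *. assert (Hs : 0 < s) by (apply Cmod_gt_0; exact Hz0).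
  assert (Hfz : s * (1 - s - M * s) / (1 - s) <= Cmod (f z)).
  { assert (s <= Cmod (f z) + Cmod (f z - z)%C).
    { unfold s. replace z with (f z - (f z - z))%C at 1 by ring.
      eapply Rle_trans; [apply Cmod_triangle|]. rewrite Cmod_opp. lra. }
    replace (s * (1 - s - M * s) / (1 - s)) with (s - M * s ^ 2 * / (1 - s)) by (field; lra).
    lra. }
  assert (Hpos : 0 < s * (1 - s - M * s) / (1 - s))
    by (apply Rdiv_lt_0_compat; [apply Rmult_lt_0_compat|]; lra).
  assert (Hfz0 : f z <> 0%C) by (intro E; rewrite E, Cmod_0 in Hfz; lra).
  split; [exact Hfz0|]. intros d Hd.
  replace (z * d / f z - 1)%C with ((z * d - f z) / f z)%C by (field; exact Hfz0).
  rewrite Cmod_div by exact Hfz0.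
  apply Rle_trans with ((M * s ^ 2 * / (1 - s) ^ 2) / (s * (1 - s - M * s) / (1 - s))).
  - unfold Rdiv. apply Rmult_le_compat; [apply Cmod_ge_0 | |apply classF_deriv_le; assumption|].
    + apply Rlt_le, Rinv_0_lt_compat, Cmod_gt_0, Hfz0.
    + apply Rinv_le_contravar; assumption.
  - right. unfold deviation_bound. field. repeat split; lra.
Qed.

(* [z - M z^2/(1-z) = z - M (z^2 + z^3 + ...)]: every coefficient beyond the first has modulus [M]. *)
Definition extremal (M : R) (w : C) : C := (w - M * w * w / (1 - w))%C.

Definition extremal_coef (M : R) (n : nat) : C :=
  match n with O => 0%C | S O => 1%C | _ => RtoC (- M) end.

Definition extremal_deriv (M : R) (w : C) : C :=
  (1 - M * (2 * w - w * w) / ((1 - w) * (1 - w)))%C.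

Lemma extremal_classF (M : R) : 0 <= M -> classF M (extremal M).
Proof.
  intros HM. exists (extremal_coef M). do 2 (split; [reflexivity|]). split.
  - intros [|[|n]] Hn; [lia | lia |]. simpl. rewrite Cmod_R, Rabs_Ropp, Rabs_right; lra.
  - intros w Hw. pose proof (Cminus_1_neq_0 w Hw) as Hnz.
    apply (is_series_decr_1 (V := C_NormedModule)), (is_series_decr_1 (V := C_NormedModule)).
    pose proof (is_series_scal (V := C_NormedModule) (RtoC (- M) * w * w)%C _ _
                  (is_series_C_geom w Hw)) as G.
    match goal with |- is_series _ ?v =>
      replace v with (scal (RtoC (- M) * w * w)%C (/ (1 - w))%C)
        by (change (RtoC (- M) * w * w * / (1 - w) = extremal M w + - (1 * 0) + - (w * 1 * 1))%C;
            unfold extremal; rewrite RtoC_opp; field; exact Hnz) end.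
    eapply (is_series_ext (V := C_NormedModule)); [|exact G].
    intros n. change (RtoC (- M) * w * w * Cpow w n = Cpow w (S (S n)) * RtoC (- M))%C.
    simpl. ring.
Qed.

Lemma is_derive_extremal (M : R) (w : C) : w <> 1%C ->
  is_derive (extremal M) w (extremal_deriv M w).
Proof.
  intros Hw1. assert (Hnz : (1 - w)%C <> 0%C) by (intro E; apply Hw1; transitivity (1 - (1 - w))%C; [ring | rewrite E; ring]).
  set (m := Cmod (1 - w)%C). assert (Hm : 0 < m) by (apply Cmod_gt_0; exact Hnz).
  apply (is_derive_C_of_remainder_le _ _ _ (m / 2) (2 * Rabs M / m ^ 3)); [lra | |].
  { apply Rmult_le_pos; [pose proof (Rabs_pos M); lra|].
    apply Rlt_le, Rinv_0_lt_compat, pow_lt, Hm. }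
  intros y Hy. set (c := Cmod (y - w)%C) in *.
  assert (Hy1 : m / 2 <= Cmod (1 - y)%C).
  { assert (m <= Cmod (1 - y)%C + c).
    { unfold m, c. replace (1 - w)%C with ((1 - y) + (y - w))%C by ring. apply Cmod_triangle. }
    lra. }
  assert (Hnzy : (1 - y)%C <> 0%C) by (intro E; rewrite E, Cmod_0 in Hy1; lra).
  replace (extremal M y - extremal M w - (y - w) * extremal_deriv M w)%C
    with (- M * ((y - w) * (y - w)) / ((1 - y) * ((1 - w) * (1 - w))))%C
    by (unfold extremal, extremal_deriv; field; split; assumption).
  rewrite Cmod_div by (repeat apply Cmult_neq_0; assumption).
  rewrite !Cmod_mult, Cmod_opp, Cmod_R. fold c m.
  assert (Hden : m / 2 * (m * m) <= Cmod (1 - y)%C * (m * m)).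
  { apply Rmult_le_compat_r; [nra | exact Hy1]. }
  pose proof (Rabs_pos M). assert (0 <= c) by apply Cmod_ge_0.
  apply Rle_trans with (Rabs M * (c * c) / (m / 2 * (m * m))).
  - unfold Rdiv. apply Rmult_le_compat_l; [nra|].
    apply Rinv_le_contravar; [apply Rmult_lt_0_compat; [lra | nra] | exact Hden].
  - right. field. lra.
Qed.

Lemma extremal_deviation (M s : R) : 0 < s < 1 -> 0 < 1 - s - M * s ->
  extremal M s <> 0%C /\
  (RtoC s * extremal_deriv M s / extremal M s - 1)%C = RtoC (- deviation_bound M s).
Proof.
  intros Hs Hadm.
  assert (Hval : extremal M s = RtoC (s * (1 - s - M * s) / (1 - s))).
  { unfold extremal. rewrite RtoC_div, !RtoC_mult, !RtoC_minus, RtoC_mult by lra.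
    field. intro E. apply (f_equal Re) in E. simpl in E. lra. }
  assert (Hval0 : s * (1 - s - M * s) / (1 - s) <> 0)
    by (apply Rgt_not_eq, Rdiv_lt_0_compat; [apply Rmult_lt_0_compat|]; lra).
  split; [rewrite Hval; intro E; apply Hval0; injection E; auto|].
  rewrite Hval. unfold extremal_deriv, deviation_bound.
  rewrite RtoC_opp, !RtoC_div, !RtoC_mult, !RtoC_minus, !RtoC_mult by (try nra; lra).
  field. repeat split; intro E; apply (f_equal Re) in E; simpl in E; nra.
Qed.

Lemma Re_ge_1_sub_Cmod (w : C) : 1 - Cmod (w - 1)%C <= Re w.
Proof.
  pose proof (re_le_Cmod (w - 1)%C) as H.
  replace (Re (w - 1)%C) with (Re w - 1) in H by (destruct w; simpl; ring).
  pose proof (Rle_abs (- (Re w - 1))). rewrite Rabs_Ropp in *. lra.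
Qed.

Lemma Re_of_sub_1_eq (w : C) (y : R) : (w - 1)%C = RtoC y -> Re w = 1 + y.
Proof. intros E. replace w with (RtoC y + 1)%C by (rewrite <- E; ring). simpl. ring. Qed.

Lemma RtoC_neq_0 (x : R) : x <> 0 -> RtoC x <> 0%C.
Proof. intros Hx E. apply Hx. injection E. auto. Qed.

Lemma is_lub_greatest (E : R -> Prop) (x : R) : E x -> (forall y, E y -> y <= x) -> is_lub E x.
Proof. intros Hx Hub. split; [exact Hub|]. intros b Hb. exact (Hb x Hx). Qed.

(* [deviation_bound M s <= 1 - alpha] iff [starlike_margin M alpha s >= 0]; the equation
   [r0_eq] says that [r0] is a root of this quadratic. *)
Definition starlike_margin (M al s : R) : R := (1 - al) * (1 - s) * (1 - s - M * s) - M * s.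

Lemma r0_eq_margin (M al r : R) : r0_eq M al r -> starlike_margin M al r = 0.
Proof. unfold r0_eq, starlike_margin. intros H. simpl in H. nra. Qed.

Lemma deviation_bound_margin (M al s : R) : s < 1 -> 0 < 1 - s - M * s ->
  1 - al - deviation_bound M s = starlike_margin M al s / ((1 - s) * (1 - s - M * s)).
Proof. intros. unfold deviation_bound, starlike_margin. field. lra. Qed.

Section Root.

Variables M al r0 : R.
Hypothesis HM : 0 < M.
Hypothesis Hal : 0 <= al < 1.
Hypothesis Hr0 : 0 < r0 < 1.
Hypothesis Hroot : r0_eq M al r0.

Lemma root_admissible : 0 < 1 - r0 - M * r0.
Proof.
  pose proof (r0_eq_margin M al r0 Hroot) as H. unfold starlike_margin in H.
  destruct (Rle_lt_dec (1 - r0 - M * r0) 0) as [Hn|Hp]; [|exact Hp].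
  assert (0 <= (1 - al) * (1 - r0)) by nra. nra.
Qed.

Lemma admissible_below_root (s : R) : 0 <= s <= r0 -> 0 < 1 - s - M * s.
Proof. pose proof root_admissible. nra. Qed.

(* The margin is a quadratic in [s] with value [-M] at [s = 1]; factoring out its root
   [r0] leaves a factor that is positive on [s < 1]. *)
Lemma deviation_bound_sign (s : R) : 0 <= s < 1 -> 0 < 1 - s - M * s ->
  exists c, 0 < c /\ 1 - al - deviation_bound M s = c * (r0 - s).
Proof.
  intros Hs Hadm.
  pose proof (r0_eq_margin M al r0 Hroot) as H0.
  exists ((M + (1 - al) * (1 + M) * (1 - r0) * (1 - s))
          / ((1 - r0) * ((1 - s) * (1 - s - M * s)))).
  split.
  - apply Rdiv_lt_0_compat.
    + assert (0 <= (1 - al) * (1 + M) * (1 - r0) * (1 - s))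
        by (repeat apply Rmult_le_pos; lra). lra.
    + repeat apply Rmult_lt_0_compat; lra.
  - assert (Hfac : (1 - r0) * starlike_margin M al s
                    = (1 - s) * starlike_margin M al r0
                      + (r0 - s) * (M + (1 - al) * (1 + M) * (1 - r0) * (1 - s)))
      by (unfold starlike_margin; ring).
    rewrite H0, Rmult_0_r, Rplus_0_l in Hfac.
    rewrite deviation_bound_margin by lra.
    replace (starlike_margin M al s)
      with ((r0 - s) * (M + (1 - al) * (1 + M) * (1 - r0) * (1 - s)) / (1 - r0))
      by (rewrite <- Hfac; field; lra).
    field. repeat split; lra.
Qed.

Lemma classF_deviation_le_root (f : C -> C) : classF M f ->
  forall z : C, z <> 0%C -> Cmod z <= r0 ->
    f z <> 0%C /\ (forall d, is_derive f z d -> Cmod (z * d / f z - 1)%C <= 1 - al).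
Proof.
  intros Hf z Hz0 Hzr. pose proof (Cmod_ge_0 z) as Hz.
  pose proof (admissible_below_root (Cmod z) (conj Hz Hzr)) as Hadm.
  destruct (classF_deviation_le M f z Hf Hz0 ltac:(lra) Hadm) as [Hfz Hdev].
  split; [exact Hfz|]. intros d Hd.
  destruct (deviation_bound_sign (Cmod z) ltac:(lra) Hadm) as [c [Hc E]].
  specialize (Hdev d Hd). nra.
Qed.

Lemma classF_deviation_lt_root (f : C -> C) (z d : C) : classF M f -> z <> 0%C ->
  Cmod z < r0 -> is_derive f z d -> Cmod (z * d / f z - 1)%C < 1 - al.
Proof.
  intros Hf Hz0 Hzr Hd. pose proof (Cmod_ge_0 z) as Hz.
  pose proof (admissible_below_root (Cmod z) ltac:(lra)) as Hadm.
  destruct (classF_deviation_le M f z Hf Hz0 ltac:(lra) Hadm) as [_ Hdev].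
  destruct (deviation_bound_sign (Cmod z) ltac:(lra) Hadm) as [c [Hc E]].
  specialize (Hdev d Hd). nra.
Qed.

Lemma exists_between_root (r : R) : r0 < r ->
  exists s, r0 < s < r /\ s < 1 /\ 0 < 1 - s - M * s.
Proof.
  intros Hr. pose proof root_admissible.
  set (t := Rmin (r - r0) (/ (1 + M) - r0)).
  assert (Hcr : r0 < / (1 + M)).
  { apply (Rmult_lt_reg_l (1 + M)); [lra|]. rewrite Rinv_r; lra. }
  assert (Ht : 0 < t) by (apply Rmin_pos; lra).
  assert (Ht1 : t <= r - r0) by apply Rmin_l.
  assert (Ht2 : (1 + M) * (r0 + t / 2) < 1).
  { assert (t <= / (1 + M) - r0) by apply Rmin_r.
    replace 1 with ((1 + M) * / (1 + M)) at 2 by (field; lra).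
    apply Rmult_lt_compat_l; lra. }
  exists (r0 + t / 2). repeat split; nra.
Qed.

Lemma extremal_beyond_root (r : R) : r0 < r ->
  exists s g, r0 < s < r /\ s < 1 /\ 1 - al < g /\ extremal M (RtoC s) <> 0%C /\
    is_derive (extremal M) (RtoC s) (extremal_deriv M s) /\
    (RtoC s * extremal_deriv M s / extremal M s - 1)%C = RtoC (- g).
Proof.
  intros Hr. destruct (exists_between_root r Hr) as [s [Hs [Hs1 Hadm]]].
  destruct (extremal_deviation M s ltac:(lra) Hadm) as [Hf0 E].
  destruct (deviation_bound_sign s ltac:(lra) Hadm) as [c [Hc Ec]].
  exists s, (deviation_bound M s).
  do 3 (split; [nra|]). split; [exact Hf0|]. split; [|exact E].
  apply is_derive_extremal. intro E1. injection E1. lra.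
Qed.

Lemma extremal_sharp_root (r : R) : r0 < r ->
  exists f (z d : C), classF M f /\ z <> 0%C /\ Cmod z <= r /\ Cmod z < 1 /\
    f z <> 0%C /\ is_derive f z d /\ 1 - al < Cmod ((z * d / f z) - 1)%C.
Proof.
  intros Hr. destruct (extremal_beyond_root r Hr) as [s [g [Hs [Hs1 [Hg [Hf0 [Hd E]]]]]]].
  exists (extremal M), (RtoC s), (extremal_deriv M s).
  assert (Hmod : Cmod (RtoC s) = s) by (rewrite Cmod_R, Rabs_pos_eq; lra).
  assert (Hdev : Cmod (RtoC (- g)) = g) by (rewrite Cmod_R, Rabs_Ropp, Rabs_pos_eq; lra).
  rewrite E, Hdev, Hmod.
  split; [apply extremal_classF; lra|]. split; [apply RtoC_neq_0; lra|].
  do 2 (split; [lra|]). split; [exact Hf0|]. split; [exact Hd | lra].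
Qed.

Lemma radius_starlike_root : radius_starlike M al r0.
Proof.
  apply is_lub_greatest.
  - split; [lra|]. intros f Hf z Hz0 Hzr.
    destruct (classF_deviation_le_root f Hf z Hz0 ltac:(lra)) as [Hfz _].
    split; [exact Hfz|]. intros d Hd.
    pose proof (classF_deviation_lt_root f z d Hf Hz0 Hzr Hd).
    pose proof (Re_ge_1_sub_Cmod (z * d / f z)%C). lra.
  - intros r [Hr Hst]. destruct (Rle_lt_dec r r0) as [|Hlt]; [assumption|exfalso].
    destruct (extremal_beyond_root r Hlt) as [s [g [Hs [Hs1 [Hg [Hf0 [Hd E]]]]]]].
    destruct (Hst _ (extremal_classF M ltac:(lra)) (RtoC s) (RtoC_neq_0 s ltac:(lra))
                ltac:(rewrite Cmod_R, Rabs_pos_eq; lra)) as [_ Hre].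
    specialize (Hre _ Hd). rewrite (Re_of_sub_1_eq _ _ E) in Hre. lra.
Qed.

End Root.

Lemma radius_parabolic_root (M r : R) : 0 < M -> 0 < r < 1 -> r0_eq M (1 / 2) r ->
  radius_parabolic M r.
Proof.
  intros HM Hr Hroot. assert (Hal : 0 <= 1 / 2 < 1) by lra.
  apply is_lub_greatest.
  - split; [lra|]. intros f Hf z Hz0 Hzr d Hd.
    pose proof (classF_deviation_lt_root M (1 / 2) r HM Hal Hr Hroot f z d Hf Hz0 Hzr Hd).
    pose proof (Re_ge_1_sub_Cmod (z * d / f z)%C). lra.
  - intros r' [Hr' Hpar]. destruct (Rle_lt_dec r' r) as [|Hlt]; [assumption|exfalso].
    destruct (extremal_beyond_root M (1 / 2) r HM Hal Hr Hroot r' Hlt)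
      as [s [g [Hs [Hs1 [Hg [Hf0 [Hd E]]]]]]].
    specialize (Hpar _ (extremal_classF M ltac:(lra)) (RtoC s) (RtoC_neq_0 s ltac:(lra))
                  ltac:(rewrite Cmod_R, Rabs_pos_eq; lra) _ Hd).
    rewrite (Re_of_sub_1_eq _ _ E), E, Cmod_R, Rabs_Ropp, Rabs_pos_eq in Hpar; lra.
Qed.

Theorem corollary2p6 (M alpha r0 r12 : R) :
  0 < M -> 0 <= alpha < 1 ->
  0 < r0 < 1 -> r0_eq M alpha r0 ->
  0 < r12 < 1 -> r0_eq M (1 / 2) r12 ->
  ((forall f, classF M f ->
     forall z : C, z <> 0%C -> Cmod z <= r0 ->
       f z <> 0%C /\
       (forall d : C, is_derive f z d -> Cmod ((z * d / f z) - 1)%C <= 1 - alpha)) /\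
   (forall r, r0 < r ->
     exists f (z d : C), classF M f /\ z <> 0%C /\ Cmod z <= r /\ Cmod z < 1 /\
       f z <> 0%C /\ is_derive f z d /\ 1 - alpha < Cmod ((z * d / f z) - 1)%C)) /\
  radius_starlike M alpha r0 /\
  radius_parabolic M r12.
Proof.
  intros HM Hal Hr0 Hroot Hr12 Hroot12.
  split; [split|split].
  - exact (classF_deviation_le_root M alpha r0 HM Hal Hr0 Hroot).
  - exact (extremal_sharp_root M alpha r0 HM Hal Hr0 Hroot).
  - exact (radius_starlike_root M alpha r0 HM Hal Hr0 Hroot).
  - exact (radius_parabolic_root M r12 HM Hr12 Hroot12).
Qed.
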